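(* (i) If $\alpha=\beta=0$, then $z_\alpha=z_\beta=1$; in particular $x_{\rm lavs}(h_1,h_2)=x_{\rm peak}(h_1,h_2)$ and $x_{\rm gloom}(h_1,h_2)=x_{\rm valy}(h_1,h_2)$. As $\alpha\to1/\delta$, $z_\alpha\to0$; as $\beta\to+\infty$, $z_\beta\to+\infty$. (ii) For fixed $h_1\ge h_2>0$ (and all other parameters fixed), as the risk-aversion parameter $\gamma\to\infty$, $$\lim_{\gamma\to\infty}\frac{x_{\rm lavs}(h_1,h_2)}{c^*(x_{\rm lavs}(h_1,h_2),h_1,h_2)}=\lim_{\gamma\to\infty}\frac{x_{\rm gloom}(h_1,h_2)}{c^*(x_{\rm gloom}(h_1,h_2),h_1,h_2)}=\frac1r.$$
   Context: Parameters: $r>0$, $\mu>0$, $\sigma>0$, $\kappa=(\mu-r)/\sigma$, $\delta>0$, $\gamma>0,\gamma\ne1$, $0\le\alpha\le1/\delta$, $\beta\ge0$, $K_0:=r+\frac{\delta-r}{\gamma}+\frac{\gamma-1}{2\gamma^2}\kappa^2>0$. $\gamma^*=-(1-\gamma)/\gamma$; $m_1>1$ and $m_2<\min(\gamma^*,0)$ are the roots of $\frac{\kappa^2}{2}m^2+(\delta-r-\frac{\kappa^2}{2})m-\delta=0$; $z_\alpha\in(0,1-\alpha\delta]$ solves $\frac{2}{\kappa^2m_1(m_1-1)}z^{m_1}+\frac{z}{r}(m_2-1)+m_2(\alpha-\frac1\delta)=0$; $z_\beta\in[1+\beta\delta,\infty)$ solves $\frac{2}{\kappa^2m_2(m_2-1)}z^{m_2}+\frac{z}{r}(m_1-1)-m_1(\beta+\frac1\delta)=0$.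 Coefficients: $C_5(h_2)=\frac{1-\gamma^*}{(m_1-m_2)(m_1-\gamma^* )}\big(\frac{m_2(\beta\delta+1)}{\delta}z_\beta^{-m_1}+\frac{1-m_2}{r}z_\beta^{1-m_1}\big)h_2^{1+\gamma(m_1-1)}$; $C_3(h_2)=C_5(h_2)+\frac{2(\gamma^*-1)}{\kappa^2(m_1-m_2)m_1(m_1-1)(m_1-\gamma^* )}h_2^{1+\gamma(m_1-1)}$; $C_1(h_1,h_2)=C_3(h_2)+\frac{2(1-\gamma^* )}{\kappa^2(m_1-m_2)m_1(m_1-1)(m_1-\gamma^* )}h_1^{1+\gamma(m_1-1)}$; $C_2(h_1)=\frac{1-\gamma^*}{(m_1-m_2)(m_2-\gamma^* )}\big(\frac{m_1(\alpha\delta-1)}{\delta}z_\alpha^{-m_2}+\frac{m_1-1}{r}z_\alpha^{1-m_2}\big)h_1^{1+\gamma(m_2-1)}$; $C_4(h_1)=C_2(h_1)-\frac{2(\gamma^*-1)}{\kappa^2(m_1-m_2)m_2(m_2-1)(m_2-\gamma^* )}h_1^{1+\gamma(m_2-1)}$; $C_6(h_1,h_2)=C_4(h_1)-\frac{2(1-\gamma^* )}{\kappa^2(m_1-m_2)m_2(m_2-1)(m_2-\gamma^* )}h_2^{1+\gamma(m_2-1)}$. Boundary curves: $x_{\rm lavs}=-m_1C_1(h_1,h_2)(z_\alpha h_1^{-\gamma})^{m_1-1}-m_2C_2(h_1)(z_\alpha h_1^{-\gamma})^{m_2-1}+\frac{h_1}{r}$; $x_{\rm peak}=-m_1C_1(h_1,h_2)(h_1^{-\gamma})^{m_1-1}-m_2C_2(h_1)(h_1^{-\gamma})^{m_2-1}+\frac{h_1}{r}$;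 $x_{\rm valy}=-m_1C_5(h_2)(h_2^{-\gamma})^{m_1-1}-m_2C_6(h_1,h_2)(h_2^{-\gamma})^{m_2-1}+\frac{h_2}{r}$; $x_{\rm gloom}=-m_1C_5(h_2)(z_\beta h_2^{-\gamma})^{m_1-1}-m_2C_6(h_1,h_2)(z_\beta h_2^{-\gamma})^{m_2-1}+\frac{h_2}{r}$. The optimal feedback consumption $c^*(x,h_1,h_2)$ (for the problem of maximizing $\mathbb E[\int_0^\infty e^{-\delta t}(U(c_t)dt-\alpha dV^+_{1t}-\beta dV^-_{2t})]$ with $U=V=x^{1-\gamma}/(1-\gamma)$, $V^+_{1t}=V(h_1\vee\sup_{s\le t}c_s)-V(h_1)$, $V^-_{2t}=V(h_2)-V(h_2\wedge\inf_{s\le t}c_s)$, over consumption/investment strategies with wealth $dX=(rX+(\mu-r)\pi-c)dt+\sigma\pi dW$, $X\ge0$) satisfies $c^*(x,h_1,h_2)=h_1$ for $x_{\rm peak}<x\le x_{\rm lavs}$ and $c^*(x,h_1,h_2)=h_2$ for $x_{\rm gloom}\le x<x_{\rm valy}$. *)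

From Stdlib Require Import Reals ClassicalEpsilon.
From Coquelicot Require Import Coquelicot.
Open Scope R_scope.

Definition kappa (r mu sigma : R) : R := (mu - r) / sigma.

Definition gstar (g : R) : R := - (1 - g) / g.

Definition K0 (r mu sigma delta g : R) : R :=
  r + (delta - r) / g + (g - 1) / (2 * g ^ 2) * (kappa r mu sigma) ^ 2.

(* m1 > m2 : the two roots of (k^2/2) m^2 + (delta - r - k^2/2) m - delta = 0 *)
Definition qa (r mu sigma : R) : R := (kappa r mu sigma) ^ 2 / 2.
Definition qb (r mu sigma delta : R) : R := delta - r - (kappa r mu sigma) ^ 2 / 2.
Definition qdisc (r mu sigma delta : R) : R :=
  (qb r mu sigma delta) ^ 2 + 4 * qa r mu sigma * delta.
Definition m1 (r mu sigma delta : R) : R :=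
  (- qb r mu sigma delta + sqrt (qdisc r mu sigma delta)) / (2 * qa r mu sigma).
Definition m2 (r mu sigma delta : R) : R :=
  (- qb r mu sigma delta - sqrt (qdisc r mu sigma delta)) / (2 * qa r mu sigma).

Definition zalpha_prop (r mu sigma delta alpha z : R) : Prop :=
  let k := kappa r mu sigma in
  let a1 := m1 r mu sigma delta in
  let a2 := m2 r mu sigma delta in
  0 < z /\ z <= 1 - alpha * delta /\
  2 / (k ^ 2 * a1 * (a1 - 1)) * Rpower z a1 + z / r * (a2 - 1)
    + a2 * (alpha - 1 / delta) = 0.

Definition zalpha (r mu sigma delta alpha : R) : R :=
  epsilon (inhabits 0) (zalpha_prop r mu sigma delta alpha).

Definition zbeta_prop (r mu sigma delta beta z : R) : Prop :=
  let k := kappa r mu sigma in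
  let a1 := m1 r mu sigma delta in
  let a2 := m2 r mu sigma delta in
  1 + beta * delta <= z /\
  2 / (k ^ 2 * a2 * (a2 - 1)) * Rpower z a2 + z / r * (a1 - 1)
    - a1 * (beta + 1 / delta) = 0.

Definition zbeta (r mu sigma delta beta : R) : R :=
  epsilon (inhabits 0) (zbeta_prop r mu sigma delta beta).

Section Coeffs.
Variables (r mu sigma delta g alpha beta : R).
Let k := kappa r mu sigma.
Let a1 := m1 r mu sigma delta.
Let a2 := m2 r mu sigma delta.
Let gs := gstar g.
Let za := zalpha r mu sigma delta alpha.
Let zb := zbeta r mu sigma delta beta.

Definition C5 (h2 : R) : R :=
  (1 - gs) / ((a1 - a2) * (a1 - gs)) *
  (a2 * (beta * delta + 1) / delta * Rpower zb (- a1)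
   + (1 - a2) / r * Rpower zb (1 - a1)) * Rpower h2 (1 + g * (a1 - 1)).

Definition C3 (h2 : R) : R :=
  C5 h2 + 2 * (gs - 1) / (k ^ 2 * (a1 - a2) * a1 * (a1 - 1) * (a1 - gs))
          * Rpower h2 (1 + g * (a1 - 1)).

Definition C1 (h1 h2 : R) : R :=
  C3 h2 + 2 * (1 - gs) / (k ^ 2 * (a1 - a2) * a1 * (a1 - 1) * (a1 - gs))
          * Rpower h1 (1 + g * (a1 - 1)).

Definition C2 (h1 : R) : R :=
  (1 - gs) / ((a1 - a2) * (a2 - gs)) *
  (a1 * (alpha * delta - 1) / delta * Rpower za (- a2)
   + (a1 - 1) / r * Rpower za (1 - a2)) * Rpower h1 (1 + g * (a2 - 1)).

Definition C4 (h1 : R) : R :=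
  C2 h1 - 2 * (gs - 1) / (k ^ 2 * (a1 - a2) * a2 * (a2 - 1) * (a2 - gs))
          * Rpower h1 (1 + g * (a2 - 1)).

Definition C6 (h1 h2 : R) : R :=
  C4 h1 - 2 * (1 - gs) / (k ^ 2 * (a1 - a2) * a2 * (a2 - 1) * (a2 - gs))
          * Rpower h2 (1 + g * (a2 - 1)).

Definition x_lavs (h1 h2 : R) : R :=
  - a1 * C1 h1 h2 * Rpower (za * Rpower h1 (- g)) (a1 - 1)
  - a2 * C2 h1 * Rpower (za * Rpower h1 (- g)) (a2 - 1) + h1 / r.

Definition x_peak (h1 h2 : R) : R :=
  - a1 * C1 h1 h2 * Rpower (Rpower h1 (- g)) (a1 - 1)
  - a2 * C2 h1 * Rpower (Rpower h1 (- g)) (a2 - 1) + h1 / r.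

Definition x_valy (h1 h2 : R) : R :=
  - a1 * C5 h2 * Rpower (Rpower h2 (- g)) (a1 - 1)
  - a2 * C6 h1 h2 * Rpower (Rpower h2 (- g)) (a2 - 1) + h2 / r.

Definition x_gloom (h1 h2 : R) : R :=
  - a1 * C5 h2 * Rpower (zb * Rpower h2 (- g)) (a1 - 1)
  - a2 * C6 h1 h2 * Rpower (zb * Rpower h2 (- g)) (a2 - 1) + h2 / r.

End Coeffs.

(* The defining equations of [z_alpha] and [z_beta], multiplied out with the Vieta relations of
   the characteristic roots [m2 < 0 < 1 < m1], become [z^m - m z + (m - 1) w = 0] with
   [w = 1 - alpha delta], resp. [w = 1 + beta delta].  The intermediate value theorem gives a root
   on the required side of [w], the generalised Bernoulli inequality [z^m > 1 + m (z - 1)] shows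
   that [z = 1] is the only one when [w = 1], and the side constraints [z <= 1 - alpha delta],
   resp. [z >= 1 + beta delta], give the two limits of part (i).

   For part (ii), [1 - gamma^* = 1/gamma] and [m - gamma^* = (1 + gamma (m - 1))/gamma], so each
   coefficient [C_i] is a fixed combination of powers of [h1] and [h2] divided by
   [1 + gamma (m_i - 1)].  Against the factor [(z h^-gamma)^(m - 1)] of the boundary curves these
   powers reduce to [h1], [h2], [h2 (h2/h1)^(gamma (m1 - 1))] or [h1 (h1/h2)^(gamma (m2 - 1))],
   all bounded when [h2 <= h1]; hence [x_lavs = h1/r + O(1/gamma)] and
   [x_gloom = h2/r + O(1/gamma)].  The signs of the brackets in [C2] and [C5] (again from Vieta)
   make every [C_i] nonnegative for [gamma > 1], so [x_peak <= x_lavs] and [x_gloom <= x_valy];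
   there [c^*] equals [h1], resp. [h2], and both ratios tend to [1/r]. *)

From Pilot Require Import Defs.
From Stdlib Require Import Reals Lra ClassicalEpsilon.
From Coquelicot Require Import Coquelicot.
Open Scope R_scope.

Lemma Rpower_gt0 x y : 0 < Rpower x y.
Proof. apply exp_pos. Qed.

Lemma Rpower_1_base y : Rpower 1 y = 1.
Proof. unfold Rpower; rewrite ln_1, Rmult_0_r; apply exp_0. Qed.

Lemma Rpower_1_plus x y : 0 < x -> Rpower x (1 + y) = x * Rpower x y.
Proof. intros hx. rewrite Rpower_plus, Rpower_1 by exact hx. reflexivity. Qed.

Lemma Rpower_eq_mul_pred x y : 0 < x -> Rpower x y = x * Rpower x (y - 1).
Proof. intros hx. rewrite <- Rpower_1_plus by exact hx. f_equal; ring. Qed.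

Lemma Rpower_div x y c : 0 < x -> 0 < y -> Rpower (x / y) c = Rpower x c / Rpower y c.
Proof.
  intros hx hy. unfold Rdiv. rewrite <- Rpower_mult_distr by (auto using Rinv_0_lt_compat).
  f_equal. unfold Rpower. rewrite ln_Rinv, <- exp_Ropp by exact hy. f_equal; ring.
Qed.

Lemma Rpower_mult_Rpower_opp z h g b : 0 < z ->
  Rpower (z * Rpower h (- g)) b = Rpower z b / Rpower h (g * b).
Proof.
  intros hz. rewrite <- Rpower_mult_distr by (auto using Rpower_gt0).
  rewrite Rpower_mult. replace (- g * b) with (- (g * b)) by ring.
  rewrite Rpower_Ropp. reflexivity.
Qed.

Lemma Rpower_le_antimono a b c : c <= 0 -> 0 < a <= b -> Rpower b c <= Rpower a c.
Proof.
  intros hc hab. rewrite <- (Ropp_involutive c), (Rpower_Ropp b), (Rpower_Ropp a).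
  apply Rinv_le_contravar; [apply Rpower_gt0 | apply Rle_Rpower_l; lra].
Qed.

Lemma Rpower_le_1 z b : 0 < z -> b * (z - 1) <= 0 -> Rpower z b <= 1.
Proof.
  intros hz hb. rewrite <- (Rpower_1_base b).
  destruct (Rtotal_order z 1) as [h | [-> | h]].
  - apply Rle_Rpower_l; nra.
  - lra.
  - apply Rpower_le_antimono; nra.
Qed.

Lemma Rpower_ge_1 z b : 0 < z -> 0 <= b * (z - 1) -> 1 <= Rpower z b.
Proof.
  intros hz hb. rewrite <- (Rpower_1_base b).
  destruct (Rtotal_order z 1) as [h | [-> | h]].
  - apply Rpower_le_antimono; nra.
  - lra.
  - apply Rle_Rpower_l; nra.
Qed.

Lemma Rpower_ratio_bounds h h' c : 0 < h -> 0 < h' -> c * (h - h') <= 0 ->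
  0 <= h * Rpower (h / h') c <= h.
Proof.
  intros hh hh' hc. pose proof (Rpower_gt0 (h / h') c).
  assert (Rpower (h / h') c <= 1).
  { apply Rpower_le_1; [apply Rdiv_lt_0_compat; lra |].
    replace (h / h' - 1) with ((h - h') * / h') by (field; lra).
    pose proof (Rinv_0_lt_compat h' hh'). nra. }
  split; nra.
Qed.

Lemma ln_lt_sub1 z : 0 < z -> z <> 1 -> ln z < z - 1.
Proof.
  intros hz hz1. pose proof (exp_ineq1 (ln z) (ln_neq_0 z hz1 hz)) as h.
  rewrite exp_ln in h by exact hz. lra.
Qed.

(* For [1 < a] write [z^a = z * z^(a-1)] and use [z ln z > z - 1]. *)
Lemma Rpower_bernoulli a z : (a < 0 \/ 1 < a) -> 0 < z -> z <> 1 ->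
  1 + a * (z - 1) < Rpower z a.
Proof.
  intros ha hz hz1.
  pose proof (ln_lt_sub1 z hz hz1) as hln.
  destruct ha as [ha | ha].
  - pose proof (exp_ineq1_le (a * ln z)). unfold Rpower. nra.
  - assert (hzln : z - 1 < z * ln z).
    { assert (hinv : ln (/ z) < / z - 1).
      { apply ln_lt_sub1; [now apply Rinv_0_lt_compat |].
        intro h. apply hz1. rewrite <- (Rinv_inv z), h. apply Rinv_1. }
      rewrite ln_Rinv in hinv by exact hz.
      assert (z * / z = 1) by (field; lra). nra. }
    pose proof (exp_ineq1_le ((a - 1) * ln z)) as hexp.
    rewrite (Rpower_eq_mul_pred z a hz). unfold Rpower at 1. nra.
Qed.

Lemma IVT_interv_le (f : R -> R) x y :
  x <= y -> (forall z, x <= z <= y -> continuity_pt f z) -> f x * f y <= 0 ->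
  exists z, x <= z <= y /\ f z = 0.
Proof.
  intros hxy hf hsign.
  destruct (Req_dec (f x) 0) as [hx | hx]; [now exists x; split; [lra |] |].
  destruct (Req_dec (f y) 0) as [hy | hy]; [now exists y; split; [lra |] |].
  assert (hlt : x < y).
  { destruct hxy as [hlt | ->]; [exact hlt |]. exfalso; nra. }
  destruct (Rlt_or_le (f x) 0) as [hneg | hpos].
  - destruct (Ranalysis5.IVT_interv f x y hf hlt hneg) as [z hz]; [nra |].
    now exists z.
  - destruct (Ranalysis5.IVT_interv (fun z => - f z) x y) as [z [hz hfz]];
      [intros z hz; now apply continuity_pt_opp, hf | exact hlt | lra | nra |].
    exists z; split; [exact hz | lra].
Qed.

Lemma continuity_pt_power_gap a c z : 0 < z ->
  continuity_pt (fun x => Rpower x a - a * x + c) z.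
Proof.
  intros hz. apply continuity_pt_filterlim.
  apply (ex_derive_continuous (fun x => Rpower x a - a * x + c)).
  unfold Rpower. auto_derive. lra.
Qed.

(* The left-hand side is [z0^a > 0] at [z0 = (a - 1) w / a] and [w^a - w <= 0] at [z = w]. *)
Lemma power_gap_root_below a w : 1 < a -> 0 < w <= 1 ->
  exists z, 0 < z <= w /\ Rpower z a - a * z + (a - 1) * w = 0.
Proof.
  intros ha hw.
  set (z0 := (a - 1) * w / a).
  assert (hz0 : 0 < z0 < w).
  { unfold z0; split; [apply Rdiv_lt_0_compat; nra |].
    apply Rmult_lt_reg_r with a; [lra |]. unfold Rdiv.
    rewrite Rmult_assoc, Rinv_l by lra. nra. }
  assert (hgap0 : Rpower z0 a - a * z0 + (a - 1) * w = Rpower z0 a)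
    by (unfold z0; field; lra).
  assert (hgapw : Rpower w a - a * w + (a - 1) * w <= 0).
  { rewrite (Rpower_eq_mul_pred w a) by lra.
    assert (Rpower w (a - 1) <= 1) by (apply Rpower_le_1; nra).
    nra. }
  destruct (IVT_interv_le (fun x => Rpower x a - a * x + (a - 1) * w) z0 w)
    as [z [hz hroot]]; [lra | intros z hz; apply continuity_pt_power_gap; lra | |].
  - cbv beta. rewrite hgap0. pose proof (Rpower_gt0 z0 a). nra.
  - exists z; split; [lra | exact hroot].
Qed.

Lemma power_gap_root_above a w : a < 0 -> 1 <= w ->
  exists z, w <= z /\ Rpower z a - a * z + (a - 1) * w = 0.
Proof.
  intros ha hw.
  set (z0 := (a - 1) * w / a).
  assert (hz0 : w < z0).
  { unfold z0. apply Rmult_lt_reg_r with (- a); [lra |].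
    replace ((a - 1) * w / a * - a) with ((1 - a) * w) by (field; lra). nra. }
  assert (hgap0 : Rpower z0 a - a * z0 + (a - 1) * w = Rpower z0 a)
    by (unfold z0; field; lra).
  assert (hgapw : Rpower w a - a * w + (a - 1) * w <= 0).
  { assert (Rpower w a <= 1) by (apply Rpower_le_1; nra). nra. }
  destruct (IVT_interv_le (fun x => Rpower x a - a * x + (a - 1) * w) w z0)
    as [z [hz hroot]]; [lra | intros z hz; apply continuity_pt_power_gap; lra | |].
  - cbv beta. rewrite hgap0. pose proof (Rpower_gt0 z0 a). nra.
  - exists z; split; [lra | exact hroot].
Qed.

(** * Limits as the risk aversion tends to infinity *)

Lemma is_lim_inv_affine a : a <> 1 -> is_lim (fun g => / (1 + g * (a - 1))) p_infty 0.
Proof.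
  intros ha. apply is_lim_spec. intros eps.
  pose proof (cond_pos eps) as heps.
  assert (hd : 0 < Rabs (a - 1)) by (apply Rabs_pos_lt; lra).
  exists ((1 + / eps) / Rabs (a - 1)). intros g hg.
  assert (hg' : 1 + / eps < g * Rabs (a - 1)).
  { apply Rmult_lt_compat_r with (r := Rabs (a - 1)) in hg; [| exact hd].
    unfold Rdiv in hg. rewrite Rmult_assoc, Rinv_l, Rmult_1_r in hg by lra. exact hg. }
  pose proof (Rinv_0_lt_compat eps heps).
  assert (hlarge : / eps < Rabs (1 + g * (a - 1))).
  { assert (0 < g) by nra.
    pose proof (Rabs_triang (1 + g * (a - 1)) (Ropp 1)) as htri.
    replace (1 + g * (a - 1) + Ropp 1) with (g * (a - 1)) in htri by ring.
    rewrite Rabs_mult, Rabs_Ropp, Rabs_R1, (Rabs_pos_eq g) in htri by lra. lra. }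
  change (Rabs (/ (1 + g * (a - 1)) - 0) < eps).
  rewrite Rminus_0_r, Rabs_inv, <- (Rinv_inv eps).
  apply Rinv_lt_contravar; [apply Rmult_lt_0_compat; lra | exact hlarge].
Qed.

Lemma is_lim_bounded_div (u : R -> R) a M : a <> 1 ->
  (forall g, 1 < g -> Rabs (u g) <= M) ->
  is_lim (fun g => u g / (1 + g * (a - 1))) p_infty 0.
Proof.
  intros ha hu.
  set (v g := M * Rabs (/ (1 + g * (a - 1)))).
  assert (hv : is_lim v p_infty 0).
  { replace (Finite 0) with (Rbar_mult M (Rbar_abs 0)) by (simpl; f_equal; rewrite Rabs_R0; ring).
    apply is_lim_scal_l, is_lim_Rabs, is_lim_inv_affine, ha. }
  apply (is_lim_le_le_loc (fun g => - v g) v).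
  - exists 1. intros g hg.
    assert (hle : Rabs (u g / (1 + g * (a - 1))) <= v g).
    { unfold Rdiv, v. rewrite Rabs_mult.
      apply Rmult_le_compat_r; [apply Rabs_pos | exact (hu g hg)]. }
    pose proof (Rle_abs (u g / (1 + g * (a - 1)))).
    pose proof (Rle_abs (- (u g / (1 + g * (a - 1))))) as hneg.
    rewrite Rabs_Ropp in hneg. lra.
  - replace (Finite 0) with (Rbar_opp 0) by (simpl; f_equal; ring).
    now apply is_lim_opp.
  - exact hv.
Qed.

Lemma is_lim_const_add_bounded_div c a b w p q s (X : R -> R) M :
  a <> 1 -> b <> 1 -> (forall g, 1 < g -> 0 <= X g <= M) ->
  is_lim (fun g => c + w * (p + q * X g) / (1 + g * (a - 1)) + s / (1 + g * (b - 1)))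
    p_infty c.
Proof.
  intros ha hb hX.
  assert (h1 : is_lim (fun g => w * (p + q * X g) / (1 + g * (a - 1))) p_infty 0).
  { apply (is_lim_bounded_div _ a (Rabs w * (Rabs p + Rabs q * M))); [exact ha |].
    intros g hg. destruct (hX g hg).
    rewrite Rabs_mult. apply Rmult_le_compat_l; [apply Rabs_pos |].
    eapply Rle_trans; [apply Rabs_triang |].
    rewrite Rabs_mult, (Rabs_pos_eq (X g)) by lra.
    pose proof (Rabs_pos q). nra. }
  assert (h2 : is_lim (fun g => s / (1 + g * (b - 1))) p_infty 0)
    by (apply (is_lim_bounded_div _ b (Rabs s)); [exact hb | intros; apply Rle_refl]).
  pose proof (is_lim_plus' _ _ _ _ _ (is_lim_plus' _ _ _ _ _ (is_lim_const c p_infty) h1) h2)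
    as h.
  rewrite !Rplus_0_r in h. exact h.
Qed.

Lemma filterlim_ratio_eventually (x : R -> R) (c : R -> R -> R) (h r : R) :
  0 < h -> r <> 0 -> is_lim x p_infty (h / r) -> (forall g, 1 < g -> c g (x g) = h) ->
  filterlim (fun g => x g / c g (x g)) (Rbar_locally p_infty) (locally (1 / r)).
Proof.
  intros hh hr hx hc.
  change (is_lim (fun g => x g / c g (x g)) p_infty (1 / r)).
  apply (is_lim_ext_loc (fun g => x g * / h)).
  - exists 1. intros g hg. rewrite hc by lra. reflexivity.
  - replace (1 / r) with (h / r * / h) by (field; lra).
    exact (is_lim_scal_r x (/ h) p_infty (h / r) hx).
Qed.

(** * The thresholds [z_alpha] and [z_beta] *)

(* With [a, b := m1, m2] this is the equation of [z_alpha], with [a, b := m2, m1] that of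
   [z_beta]. *)
Lemma threshold_equation_iff k A a b r delta t z :
  k ^ 2 = 2 * A -> A * a * b = - delta -> A * (a - 1) * (b - 1) = - r ->
  A * a * (a - 1) <> 0 -> r <> 0 ->
  2 / (k ^ 2 * a * (a - 1)) * Rpower z a + z / r * (b - 1) + b * t = 0 <->
  Rpower z a - a * z + (a - 1) * (- delta * t) = 0.
Proof.
  intros hk hdelta hr hA hr0.
  assert (hscale : (2 / (k ^ 2 * a * (a - 1)) * Rpower z a + z / r * (b - 1) + b * t)
                   * (A * a * (a - 1)) = Rpower z a - a * z + (a - 1) * (- delta * t)).
  { rewrite hk, <- hdelta.
    replace r with (- (A * (a - 1) * (b - 1))) by lra.
    field. repeat split; intro; apply hA; nra. }
  rewrite <- hscale. split; intro h.
  - rewrite h; ring.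
  - apply Rmult_integral in h. tauto.
Qed.

Lemma vieta_shift A a b r delta : A * a * b = - delta -> A * (a - 1) * (b - 1) = - r ->
  a * r - (a - 1) * delta = A * a * (a - 1).
Proof.
  intros hprod hshift.
  replace r with (- (A * (a - 1) * (b - 1))) by lra.
  replace delta with (- (A * a * b)) by lra. ring.
Qed.

Section Model.
Variables r mu sigma delta : R.
Hypotheses (hr : 0 < r) (hsigma : 0 < sigma) (hdelta : 0 < delta) (hmu : mu <> r).

Local Notation k := (kappa r mu sigma).
Local Notation A := (qa r mu sigma).
Local Notation a1 := (m1 r mu sigma delta).
Local Notation a2 := (m2 r mu sigma delta).

Lemma kappa_sqr : k ^ 2 = 2 * A.
Proof. unfold qa; field. Qed.

Lemma kappa_neq0 : k <> 0.
Proof.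
  unfold kappa, Rdiv. apply Rmult_integral_contrapositive_currified;
    [lra | apply Rinv_neq_0_compat; lra].
Qed.

Lemma qa_gt0 : 0 < A.
Proof. pose proof (pow2_gt_0 k kappa_neq0). rewrite kappa_sqr in *. lra. Qed.

Lemma m2_lt_m1 : a2 < a1.
Proof.
  pose proof qa_gt0.
  assert (hD : 0 < sqrt (qdisc r mu sigma delta)).
  { apply sqrt_lt_R0. unfold qdisc. pose proof (pow2_ge_0 (qb r mu sigma delta)). nra. }
  unfold m1, m2, Rdiv. apply Rmult_lt_compat_r; [apply Rinv_0_lt_compat |]; lra.
Qed.

Lemma qa_m1_m2 : A * a1 * a2 = - delta.
Proof.
  pose proof qa_gt0.
  assert (hs : sqrt (qdisc r mu sigma delta) * sqrt (qdisc r mu sigma delta)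
               = qb r mu sigma delta ^ 2 + 4 * A * delta).
  { apply sqrt_sqrt. pose proof (pow2_ge_0 (qb r mu sigma delta)). nra. }
  unfold m1, m2. set (s := sqrt _) in *. set (b := qb r mu sigma delta) in *.
  transitivity ((b ^ 2 - s * s) / (4 * A)); [field; lra | rewrite hs; field; lra].
Qed.

Lemma qa_m1_add_m2 : A * (a1 + a2) = - qb r mu sigma delta.
Proof. pose proof qa_gt0. unfold m1, m2. field. lra. Qed.

Lemma qa_m1_m2_shift : A * (a1 - 1) * (a2 - 1) = - r.
Proof.
  replace (A * (a1 - 1) * (a2 - 1)) with (A * a1 * a2 - A * (a1 + a2) + A) by ring.
  rewrite qa_m1_m2, qa_m1_add_m2. unfold qb, qa. field.
Qed.

Lemma m2_lt0 : a2 < 0.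
Proof.
  pose proof qa_gt0; pose proof m2_lt_m1; pose proof qa_m1_m2.
  assert (a1 * a2 < 0) by nra. nra.
Qed.

Lemma m1_gt1 : 1 < a1.
Proof.
  pose proof qa_gt0; pose proof m2_lt0; pose proof qa_m1_m2_shift.
  assert ((a1 - 1) * (a2 - 1) < 0) by nra. nra.
Qed.

Lemma zalpha_prop_iff alpha z :
  zalpha_prop r mu sigma delta alpha z <->
  0 < z /\ z <= 1 - alpha * delta /\
  Rpower z a1 - a1 * z + (a1 - 1) * (1 - alpha * delta) = 0.
Proof.
  pose proof qa_gt0; pose proof m1_gt1.
  assert (hscale : A * a1 * (a1 - 1) <> 0)
    by (apply Rgt_not_eq, Rmult_lt_0_compat; [apply Rmult_lt_0_compat |]; lra).
  unfold zalpha_prop; cbv zeta.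
  rewrite (threshold_equation_iff k A a1 a2 r delta);
    [| apply kappa_sqr | apply qa_m1_m2 | apply qa_m1_m2_shift | exact hscale | lra].
  replace (- delta * (alpha - 1 / delta)) with (1 - alpha * delta) by (field; lra).
  tauto.
Qed.

Lemma zbeta_prop_iff beta z :
  zbeta_prop r mu sigma delta beta z <->
  1 + beta * delta <= z /\
  Rpower z a2 - a2 * z + (a2 - 1) * (1 + beta * delta) = 0.
Proof.
  pose proof qa_gt0; pose proof m2_lt0.
  assert (hscale : A * a2 * (a2 - 1) <> 0) by (apply Rgt_not_eq; nra).
  unfold zbeta_prop; cbv zeta.
  replace (2 / (k ^ 2 * a2 * (a2 - 1)) * Rpower z a2 + z / r * (a1 - 1) - a1 * (beta + 1 / delta))
    with (2 / (k ^ 2 * a2 * (a2 - 1)) * Rpower z a2 + z / r * (a1 - 1) + a1 * - (beta + 1 / delta))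
    by ring.
  rewrite (threshold_equation_iff k A a2 a1 r delta);
    [| apply kappa_sqr | | | exact hscale | lra].
  - replace (- delta * - (beta + 1 / delta)) with (1 + beta * delta) by (field; lra).
    tauto.
  - rewrite <- qa_m1_m2; ring.
  - rewrite <- qa_m1_m2_shift; ring.
Qed.

Lemma zalpha_spec alpha : 0 <= alpha < 1 / delta ->
  let z := zalpha r mu sigma delta alpha in
  0 < z /\ z <= 1 - alpha * delta /\
  Rpower z a1 - a1 * z + (a1 - 1) * (1 - alpha * delta) = 0.
Proof.
  intros halpha; cbv zeta. apply zalpha_prop_iff; unfold zalpha; apply epsilon_spec.
  assert (hw : 0 < 1 - alpha * delta <= 1).
  { assert (alpha * delta < 1 / delta * delta) by (apply Rmult_lt_compat_r; lra).
    replace (1 / delta * delta) with 1 in * by (field; lra). split; nra. }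
  destruct (power_gap_root_below a1 (1 - alpha * delta) m1_gt1 hw) as [z [hz hroot]].
  exists z. apply zalpha_prop_iff. repeat split; lra.
Qed.

Lemma zbeta_spec beta : 0 <= beta ->
  let z := zbeta r mu sigma delta beta in
  1 + beta * delta <= z /\ Rpower z a2 - a2 * z + (a2 - 1) * (1 + beta * delta) = 0.
Proof.
  intros hbeta; cbv zeta. apply zbeta_prop_iff; unfold zbeta; apply epsilon_spec.
  destruct (power_gap_root_above a2 (1 + beta * delta) m2_lt0) as [z hz]; [nra |].
  exists z. now apply zbeta_prop_iff.
Qed.

Lemma zalpha_0 : zalpha r mu sigma delta 0 = 1.
Proof.
  assert (h0 : 0 <= 0 < 1 / delta) by (split; [lra | apply Rdiv_lt_0_compat; lra]).
  destruct (zalpha_spec 0 h0) as (hz & hz1 & hroot).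
  set (z := zalpha r mu sigma delta 0) in *.
  destruct (Req_dec z 1) as [e | ne]; [exact e |].
  pose proof (Rpower_bernoulli a1 z (or_intror m1_gt1) hz ne). lra.
Qed.

Lemma zbeta_0 : zbeta r mu sigma delta 0 = 1.
Proof.
  destruct (zbeta_spec 0 (Rle_refl 0)) as (hz1 & hroot).
  set (z := zbeta r mu sigma delta 0) in *.
  destruct (Req_dec z 1) as [e | ne]; [exact e |].
  pose proof (Rpower_bernoulli a2 z (or_introl m2_lt0) ltac:(lra) ne). lra.
Qed.

Lemma zalpha_lim :
  filterlim (fun alpha => zalpha r mu sigma delta alpha) (at_left (1 / delta)) (locally 0).
Proof.
  assert (hpos : 0 < 1 / delta) by (apply Rdiv_lt_0_compat; lra).
  apply (filterlim_le_le (fun _ => 0) _ (fun alpha => 1 - alpha * delta) (Finite 0)).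
  - exists (mkposreal _ hpos). intros alpha hball hlt.
    change (Rabs (alpha - 1 / delta) < 1 / delta) in hball.
    apply Rabs_def2 in hball.
    destruct (zalpha_spec alpha) as (hz & hzw & _); [lra |]. lra.
  - apply filterlim_const.
  - assert (hcont := ex_derive_continuous (fun alpha => 1 - alpha * delta) (1 / delta)
                       ltac:(auto_derive; easy)).
    change (filterlim (fun alpha => 1 - alpha * delta) (locally (1 / delta))
              (locally (1 - 1 / delta * delta))) in hcont.
    replace (1 - 1 / delta * delta) with 0 in hcont by (field; lra).
    exact (filterlim_filter_le_1 _ (filter_le_within (F := locally (1 / delta)) _) hcont).
Qed.

Lemma zbeta_lim :
  filterlim (fun beta => zbeta r mu sigma delta beta) (Rbar_locally p_infty)
    (Rbar_locally p_infty).
Proof.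
  pose proof (filterlim_Rbar_mult_r delta p_infty) as hlin.
  rewrite (is_Rbar_mult_unique _ _ _ (is_Rbar_mult_p_infty_pos delta hdelta)) in hlin.
  apply (is_lim_le_p_loc (fun beta => beta * delta) _ p_infty); [| exact hlin].
  exists 0. intros beta hbeta.
  destruct (zbeta_spec beta) as [hz _]; [lra |]. lra.
Qed.

(** * The boundary curves *)

Lemma one_sub_gstar g : g <> 0 -> 1 - gstar g = / g.
Proof. intros hg; unfold gstar; field; exact hg. Qed.

Lemma gstar_sub_one g : g <> 0 -> gstar g - 1 = - / g.
Proof. intros hg; unfold gstar; field; exact hg. Qed.

Lemma sub_gstar a g : g <> 0 -> a - gstar g = (1 + g * (a - 1)) / g.
Proof. intros hg; unfold gstar; field; exact hg. Qed.

Section Boundaries.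
Variables alpha beta h1 h2 : R.
Hypotheses (halpha0 : 0 <= alpha) (halpha1 : alpha < 1 / delta) (hbeta : 0 <= beta).
Hypotheses (hh2 : 0 < h2) (hh12 : h2 <= h1).

Local Notation za := (zalpha r mu sigma delta alpha).
Local Notation zb := (zbeta r mu sigma delta beta).
(* The bracketed factors of [C2] and [C5]. *)
Local Notation nalpha := (a1 * (alpha * delta - 1) / delta * Rpower za (- a2)
                          + (a1 - 1) / r * Rpower za (1 - a2)).
Local Notation nbeta := (a2 * (beta * delta + 1) / delta * Rpower zb (- a1)
                         + (1 - a2) / r * Rpower zb (1 - a1)).
Local Notation K1 := (2 / (k ^ 2 * a1 * (a1 - 1))).
Local Notation K2 := (2 / (k ^ 2 * a2 * (a2 - 1))).
Local Notation e1 g := (1 + g * (a1 - 1)).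
Local Notation e2 g := (1 + g * (a2 - 1)).

Lemma zalpha_bounds : 0 < za <= 1 - alpha * delta.
Proof. now destruct (zalpha_spec alpha (conj halpha0 halpha1)). Qed.

Lemma zbeta_ge : 1 + beta * delta <= zb.
Proof. now destruct (zbeta_spec beta hbeta). Qed.

Lemma nalpha_nonpos : nalpha <= 0.
Proof.
  pose proof zalpha_bounds; pose proof m1_gt1; pose proof qa_gt0.
  assert (hvieta := vieta_shift A a1 a2 r delta qa_m1_m2 qa_m1_m2_shift).
  set (N := a1 * (alpha * delta - 1) * r + (a1 - 1) * za * delta).
  assert (hN : N <= 0).
  { assert (hsplit : N = - ((a1 - 1) * delta * ((1 - alpha * delta) - za))
                         - (1 - alpha * delta) * (A * a1 * (a1 - 1)))
      by (rewrite <- hvieta; unfold N; ring).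
    assert (0 <= (a1 - 1) * delta * ((1 - alpha * delta) - za))
      by (apply Rmult_le_pos; nra).
    assert (0 <= (1 - alpha * delta) * (A * a1 * (a1 - 1)))
      by (apply Rmult_le_pos; [lra | apply Rmult_le_pos; nra]).
    lra. }
  rewrite (Rpower_eq_mul_pred za (1 - a2)) by lra. replace (1 - a2 - 1) with (- a2) by ring.
  pose proof (Rpower_gt0 za (- a2)).
  replace (a1 * (alpha * delta - 1) / delta * Rpower za (- a2)
           + (a1 - 1) / r * (za * Rpower za (- a2)))
    with (- (Rpower za (- a2) * (- N) / (delta * r))) by (unfold N; field; lra).
  cut (0 <= Rpower za (- a2) * (- N) / (delta * r)); [lra |].
  apply Rdiv_le_0_compat; [apply Rmult_le_pos |]; nra.
Qed.

Lemma nbeta_nonneg : 0 <= nbeta.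
Proof.
  pose proof zbeta_ge; pose proof m2_lt0; pose proof qa_gt0.
  assert (hvieta := vieta_shift A a2 a1 r delta
                      ltac:(rewrite <- qa_m1_m2; ring) ltac:(rewrite <- qa_m1_m2_shift; ring)).
  set (N := a2 * (beta * delta + 1) * r + (1 - a2) * zb * delta).
  assert (hN : 0 <= N).
  { assert (hsplit : N = (1 - a2) * delta * (zb - (1 + beta * delta))
                         + (1 + beta * delta) * (A * a2 * (a2 - 1)))
      by (rewrite <- hvieta; unfold N; ring).
    assert (0 <= (1 - a2) * delta * (zb - (1 + beta * delta)))
      by (apply Rmult_le_pos; nra).
    assert (0 <= (1 + beta * delta) * (A * a2 * (a2 - 1))) by (apply Rmult_le_pos; nra).
    lra. }
  rewrite (Rpower_eq_mul_pred zb (1 - a1)) by nra. replace (1 - a1 - 1) with (- a1) by ring.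
  pose proof (Rpower_gt0 zb (- a1)).
  replace (a2 * (beta * delta + 1) / delta * Rpower zb (- a1)
           + (1 - a2) / r * (zb * Rpower zb (- a1)))
    with (Rpower zb (- a1) * N / (delta * r)) by (unfold N; field; lra).
  apply Rdiv_le_0_compat; [apply Rmult_le_pos |]; nra.
Qed.

Lemma C1_closed g : 1 < g ->
  Defs.C1 r mu sigma delta g beta h1 h2 =
  (nbeta * Rpower h2 (e1 g) + K1 * (Rpower h1 (e1 g) - Rpower h2 (e1 g)))
  / ((a1 - a2) * e1 g).
Proof.
  intros hg. pose proof m1_gt1; pose proof m2_lt0; pose proof qa_gt0.
  unfold Defs.C1, C3, C5.
  rewrite one_sub_gstar, gstar_sub_one, sub_gstar by lra.
  rewrite kappa_sqr. field. repeat split; nra.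
Qed.

Lemma C2_closed g : 1 < g ->
  C2 r mu sigma delta g alpha h1 = nalpha * Rpower h1 (e2 g) / ((a1 - a2) * e2 g).
Proof.
  intros hg. pose proof m1_gt1; pose proof m2_lt0.
  unfold C2. rewrite one_sub_gstar, sub_gstar by lra.
  field. repeat split; nra.
Qed.

Lemma C5_closed g : 1 < g ->
  C5 r mu sigma delta g beta h2 = nbeta * Rpower h2 (e1 g) / ((a1 - a2) * e1 g).
Proof.
  intros hg. pose proof m1_gt1; pose proof m2_lt0.
  unfold C5. rewrite one_sub_gstar, sub_gstar by lra.
  field. repeat split; nra.
Qed.

Lemma C6_closed g : 1 < g ->
  C6 r mu sigma delta g alpha h1 h2 =
  (nalpha * Rpower h1 (e2 g) + K2 * (Rpower h1 (e2 g) - Rpower h2 (e2 g)))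
  / ((a1 - a2) * e2 g).
Proof.
  intros hg. pose proof m1_gt1; pose proof m2_lt0; pose proof qa_gt0.
  unfold C6, C4, C2.
  rewrite one_sub_gstar, gstar_sub_one, sub_gstar by lra.
  rewrite kappa_sqr. field. repeat split; nra.
Qed.

Lemma exponent_m1_pos g : 1 < g -> 0 < e1 g.
Proof. intros hg. pose proof m1_gt1. nra. Qed.

Lemma exponent_m2_neg g : 1 < g -> e2 g < 0.
Proof. intros hg. pose proof m2_lt0. nra. Qed.

Lemma K1_pos : 0 < K1.
Proof.
  pose proof m1_gt1; pose proof qa_gt0. rewrite kappa_sqr.
  apply Rdiv_lt_0_compat; [lra |].
  apply Rmult_lt_0_compat; [apply Rmult_lt_0_compat; [apply Rmult_lt_0_compat |] |]; lra.
Qed.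

Lemma K2_pos : 0 < K2.
Proof.
  pose proof m2_lt0; pose proof qa_gt0. rewrite kappa_sqr.
  apply Rdiv_lt_0_compat; [lra | nra].
Qed.

Lemma C1_nonneg g : 1 < g -> 0 <= Defs.C1 r mu sigma delta g beta h1 h2.
Proof.
  intros hg. rewrite C1_closed by exact hg.
  pose proof (exponent_m1_pos g hg); pose proof m2_lt_m1; pose proof nbeta_nonneg;
    pose proof K1_pos; pose proof (Rpower_gt0 h2 (e1 g)).
  assert (Rpower h2 (e1 g) <= Rpower h1 (e1 g)) by (apply Rle_Rpower_l; lra).
  apply Rdiv_le_0_compat; [nra | apply Rmult_lt_0_compat; lra].
Qed.

Lemma C2_nonneg g : 1 < g -> 0 <= C2 r mu sigma delta g alpha h1.
Proof.
  intros hg. rewrite C2_closed by exact hg.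
  pose proof (exponent_m2_neg g hg); pose proof m2_lt_m1; pose proof nalpha_nonpos;
    pose proof (Rpower_gt0 h1 (e2 g)).
  assert (/ ((a1 - a2) * e2 g) < 0) by (apply Rinv_lt_0_compat; nra).
  set (n := nalpha) in *.
  assert (n * Rpower h1 (e2 g) <= 0) by nra.
  unfold Rdiv. nra.
Qed.

Lemma C5_nonneg g : 1 < g -> 0 <= C5 r mu sigma delta g beta h2.
Proof.
  intros hg. rewrite C5_closed by exact hg.
  pose proof (exponent_m1_pos g hg); pose proof m2_lt_m1; pose proof nbeta_nonneg;
    pose proof (Rpower_gt0 h2 (e1 g)).
  apply Rdiv_le_0_compat; [nra | apply Rmult_lt_0_compat; lra].
Qed.

Lemma C6_nonneg g : 1 < g -> 0 <= C6 r mu sigma delta g alpha h1 h2.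
Proof.
  intros hg. rewrite C6_closed by exact hg.
  pose proof (exponent_m2_neg g hg); pose proof m2_lt_m1; pose proof nalpha_nonpos;
    pose proof K2_pos; pose proof (Rpower_gt0 h1 (e2 g)).
  assert (Rpower h1 (e2 g) <= Rpower h2 (e2 g)) by (apply Rpower_le_antimono; lra).
  assert (/ ((a1 - a2) * e2 g) < 0) by (apply Rinv_lt_0_compat; nra).
  set (n := nalpha) in *. set (c := K2) in *.
  assert (n * Rpower h1 (e2 g) + c * (Rpower h1 (e2 g) - Rpower h2 (e2 g)) <= 0) by nra.
  unfold Rdiv. nra.
Qed.

Lemma x_peak_le_x_lavs g : 1 < g ->
  x_peak r mu sigma delta g alpha beta h1 h2 <= x_lavs r mu sigma delta g alpha beta h1 h2.
Proof.
  intros hg. pose proof m1_gt1; pose proof m2_lt0.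
  destruct zalpha_bounds as [hz hzw]. assert (hz1 : za <= 1) by nra.
  pose proof (C1_nonneg g hg); pose proof (C2_nonneg g hg).
  unfold x_peak, x_lavs.
  rewrite <- !(Rpower_mult_distr za (Rpower h1 (- g))) by (lra || apply Rpower_gt0).
  set (y := Rpower h1 (- g)).
  pose proof (Rpower_gt0 y (a1 - 1)); pose proof (Rpower_gt0 y (a2 - 1)).
  assert (Rpower za (a1 - 1) <= 1) by (apply Rpower_le_1; nra).
  assert (1 <= Rpower za (a2 - 1)) by (apply Rpower_ge_1; nra).
  set (c1 := Defs.C1 _ _ _ _ _ _ _ _) in *. set (c2 := C2 _ _ _ _ _ _ _) in *.
  assert (0 <= (a1 * c1) * Rpower y (a1 - 1) * (1 - Rpower za (a1 - 1)))
    by (apply Rmult_le_pos; [apply Rmult_le_pos; [apply Rmult_le_pos |] |]; lra).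
  assert (0 <= (- a2 * c2) * Rpower y (a2 - 1) * (Rpower za (a2 - 1) - 1))
    by (apply Rmult_le_pos; [apply Rmult_le_pos; [apply Rmult_le_pos |] |]; lra).
  lra.
Qed.

Lemma x_gloom_le_x_valy g : 1 < g ->
  x_gloom r mu sigma delta g alpha beta h1 h2 <= x_valy r mu sigma delta g alpha beta h1 h2.
Proof.
  intros hg. pose proof m1_gt1; pose proof m2_lt0; pose proof zbeta_ge.
  assert (hz1 : 1 <= zb) by nra.
  pose proof (C5_nonneg g hg); pose proof (C6_nonneg g hg).
  unfold x_gloom, x_valy.
  rewrite <- !(Rpower_mult_distr zb (Rpower h2 (- g))) by (nra || apply Rpower_gt0).
  set (y := Rpower h2 (- g)).
  pose proof (Rpower_gt0 y (a1 - 1)); pose proof (Rpower_gt0 y (a2 - 1)).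
  assert (1 <= Rpower zb (a1 - 1)) by (apply Rpower_ge_1; nra).
  assert (Rpower zb (a2 - 1) <= 1) by (apply Rpower_le_1; nra).
  set (c5 := C5 _ _ _ _ _ _ _) in *. set (c6 := C6 _ _ _ _ _ _ _ _) in *.
  assert (0 <= (a1 * c5) * Rpower y (a1 - 1) * (Rpower zb (a1 - 1) - 1))
    by (apply Rmult_le_pos; [apply Rmult_le_pos; [apply Rmult_le_pos |] |]; lra).
  assert (0 <= (- a2 * c6) * Rpower y (a2 - 1) * (1 - Rpower zb (a2 - 1)))
    by (apply Rmult_le_pos; [apply Rmult_le_pos; [apply Rmult_le_pos |] |]; lra).
  lra.
Qed.

Lemma x_lavs_closed g : 1 < g ->
  x_lavs r mu sigma delta g alpha beta h1 h2 =
  h1 / r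
  + (- a1 * Rpower za (a1 - 1) / (a1 - a2))
    * (K1 * h1 + (nbeta - K1) * (h2 * Rpower (h2 / h1) (g * (a1 - 1)))) / e1 g
  + (- a2 * Rpower za (a2 - 1) / (a1 - a2)) * (nalpha * h1) / e2 g.
Proof.
  intros hg. pose proof m1_gt1; pose proof m2_lt0; destruct zalpha_bounds.
  pose proof (exponent_m1_pos g hg); pose proof (exponent_m2_neg g hg).
  unfold x_lavs. rewrite C1_closed, C2_closed by exact hg.
  rewrite !Rpower_mult_Rpower_opp, Rpower_div, !Rpower_1_plus by lra.
  pose proof (Rpower_gt0 h1 (g * (a1 - 1))); pose proof (Rpower_gt0 h1 (g * (a2 - 1))).
  pose proof kappa_neq0. field. repeat split; lra.
Qed.

Lemma x_gloom_closed g : 1 < g ->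
  x_gloom r mu sigma delta g alpha beta h1 h2 =
  h2 / r
  + (- a2 * Rpower zb (a2 - 1) / (a1 - a2))
    * (- K2 * h2 + (nalpha + K2) * (h1 * Rpower (h1 / h2) (g * (a2 - 1)))) / e2 g
  + (- a1 * Rpower zb (a1 - 1) / (a1 - a2)) * (nbeta * h2) / e1 g.
Proof.
  intros hg. pose proof m1_gt1; pose proof m2_lt0; pose proof zbeta_ge.
  pose proof (exponent_m1_pos g hg); pose proof (exponent_m2_neg g hg).
  unfold x_gloom. rewrite C5_closed, C6_closed by exact hg.
  rewrite !Rpower_mult_Rpower_opp, Rpower_div, !Rpower_1_plus by nra.
  pose proof (Rpower_gt0 h2 (g * (a1 - 1))); pose proof (Rpower_gt0 h2 (g * (a2 - 1))).
  pose proof kappa_neq0. field. repeat split; lra.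
Qed.

Lemma is_lim_x_lavs :
  is_lim (fun g => x_lavs r mu sigma delta g alpha beta h1 h2) p_infty (h1 / r).
Proof.
  pose proof m1_gt1; pose proof m2_lt0.
  eapply is_lim_ext_loc.
  - exists 1. intros g hg. symmetry. exact (x_lavs_closed g hg).
  - apply (is_lim_const_add_bounded_div _ _ _ _ _ _ _ _ h2); [lra | lra |].
    intros g hg. apply Rpower_ratio_bounds; [lra | lra |].
    assert (0 <= g * (a1 - 1)) by nra. nra.
Qed.

Lemma is_lim_x_gloom :
  is_lim (fun g => x_gloom r mu sigma delta g alpha beta h1 h2) p_infty (h2 / r).
Proof.
  pose proof m1_gt1; pose proof m2_lt0.
  eapply is_lim_ext_loc.
  - exists 1. intros g hg. symmetry. exact (x_gloom_closed g hg).
  - apply (is_lim_const_add_bounded_div _ _ _ _ _ _ _ _ h1); [lra | lra |].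
    intros g hg. apply Rpower_ratio_bounds; [lra | lra |].
    assert (g * (a2 - 1) <= 0) by nra. nra.
Qed.

End Boundaries.
End Model.

Lemma K0_pos r mu sigma delta g : 0 < r -> 0 < delta -> 1 < g -> 0 < K0 r mu sigma delta g.
Proof.
  intros hr hd hg. unfold K0.
  replace (r + (delta - r) / g) with ((r * (g - 1) + delta) / g) by (field; lra).
  assert (0 < (r * (g - 1) + delta) / g) by (apply Rdiv_lt_0_compat; nra).
  assert (0 <= (g - 1) / (2 * g ^ 2) * kappa r mu sigma ^ 2).
  { apply Rmult_le_pos; [apply Rdiv_le_0_compat; nra | apply pow2_ge_0]. }
  lra.
Qed.

Theorem theorem4p2 (r mu sigma delta : R) :
  0 < r -> 0 < mu -> 0 < sigma -> 0 < delta -> mu <> r ->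
  (* (i) *)
  (zalpha r mu sigma delta 0 = 1 /\ zbeta r mu sigma delta 0 = 1 /\
   (forall g h1 h2 : R, 0 < g -> g <> 1 -> 0 < K0 r mu sigma delta g ->
      0 < h1 -> 0 < h2 ->
      x_lavs r mu sigma delta g 0 0 h1 h2 = x_peak r mu sigma delta g 0 0 h1 h2 /\
      x_gloom r mu sigma delta g 0 0 h1 h2 = x_valy r mu sigma delta g 0 0 h1 h2)) /\
  filterlim (fun alpha => zalpha r mu sigma delta alpha) (at_left (1 / delta))
    (locally 0) /\
  filterlim (fun beta => zbeta r mu sigma delta beta) (Rbar_locally p_infty)
    (Rbar_locally p_infty) /\
  (* (ii) : c g x is the optimal feedback consumption c^*(x, h1, h2) for the
     risk-aversion parameter g (h1, h2 and the other parameters fixed) *)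
  (forall (alpha beta h1 h2 : R) (c : R -> R -> R),
     0 <= alpha -> alpha < 1 / delta -> 0 <= beta ->
     0 < h2 -> h2 <= h1 ->
     (forall g x, 0 < g -> g <> 1 -> 0 < K0 r mu sigma delta g ->
        x_peak r mu sigma delta g alpha beta h1 h2 <= x <=
        x_lavs r mu sigma delta g alpha beta h1 h2 -> c g x = h1) ->
     (forall g x, 0 < g -> g <> 1 -> 0 < K0 r mu sigma delta g ->
        x_gloom r mu sigma delta g alpha beta h1 h2 <= x <=
        x_valy r mu sigma delta g alpha beta h1 h2 -> c g x = h2) ->
     filterlim (fun g => x_lavs r mu sigma delta g alpha beta h1 h2 /
                         c g (x_lavs r mu sigma delta g alpha beta h1 h2))
       (Rbar_locally p_infty) (locally (1 / r)) /\
     filterlim (fun g => x_gloom r mu sigma delta g alpha beta h1 h2 /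
                         c g (x_gloom r mu sigma delta g alpha beta h1 h2))
       (Rbar_locally p_infty) (locally (1 / r))).
Proof.
  intros hr _ hsigma hdelta hmu.
  split; [split; [| split] | split; [| split]].
  - exact (zalpha_0 r mu sigma delta hr hsigma hdelta hmu).
  - exact (zbeta_0 r mu sigma delta hr hsigma hdelta hmu).
  - intros g h1 h2 _ _ _ _ _.
    unfold x_lavs, x_peak, x_gloom, x_valy.
    rewrite (zalpha_0 r mu sigma delta), (zbeta_0 r mu sigma delta), !Rmult_1_l by assumption.
    split; reflexivity.
  - exact (zalpha_lim r mu sigma delta hr hsigma hdelta hmu).
  - exact (zbeta_lim r mu sigma delta hr hsigma hdelta hmu).
  - intros alpha beta h1 h2 c ha0 ha1 hb0 hh2 hh12 hc1 hc2. split.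
    + apply (filterlim_ratio_eventually _ _ h1); [lra | lra | apply is_lim_x_lavs; assumption |].
      intros g hg. apply hc1; [lra | lra | apply K0_pos; assumption |].
      split; [apply x_peak_le_x_lavs; assumption | apply Rle_refl].
    + apply (filterlim_ratio_eventually _ _ h2); [lra | lra | apply is_lim_x_gloom; assumption |].
      intros g hg. apply hc2; [lra | lra | apply K0_pos; assumption |].
      split; [apply Rle_refl | apply x_gloom_le_x_valy; assumption].
Qed.
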